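(* Let $n\ge 5$ and let $f$ be an RDF of $P(n,2)$ of weight $\gamma_R(P(n,2))$ with $|V_2|$ minimum among all such minimum-weight RDFs. For any index $i$, if $r_f(V'(i,7)) \le 0.5$, then $v_{i+3}\notin V_2$.
   Context: For integers $n \ge 3$ and $1 \le k < n/2$, the generalized Petersen graph $P(n,k)$ has vertex set $\{v_i, u_i : 0 \le i \le n-1\}$ and edge set $\{v_iv_{i+1},\ v_iu_i,\ u_iu_{i+k} : 0 \le i \le n-1\}$, with subscripts taken modulo $n$. A Roman domination function (RDF) of a graph $G$ is a function $f: V(G)\to\{0,1,2\}$ such that every vertex $u$ with $f(u)=0$ is adjacent to at least one vertex $v$ with $f(v)=2$. Its weight is $\sum_{u\in V(G)} f(u)$; $\gamma_R(G)$ is the minimum weight of an RDF of $G$. For an RDF $f$ write $V_i=\{w: f(w)=i\}$, $i=0,1,2$. Define $g_f(w)=0.5$ if $w\in V_2$, $g_f(w)=1$ if $w\in V_1$, and $g_f(w)=0.5\,|N(w)\cap V_2|$ if $w\in V_0$, where $N(w)$ is the set of neighbors of $w$. Let $r_f(w)=g_f(w)-0.5$ and, for $S\subseteq V(P(n,2))$, $r_f(S)=\sum_{w\in S} r_f(w)$. For an integer $i$ and $t\ge 1$, $V'(i,t)=\{v_j,u_j : i\le j\le i+t-1\}$ (subscripts modulo $n$). *)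

From HB Require Import structures.
From mathcomp Require Import all_boot all_order all_algebra.
Set Implicit Arguments. Unset Strict Implicit. Unset Printing Implicit Defensive.
Import Order.TTheory GRing.Theory Num.Theory.

(* Vertices of P(n,2): (j, false) = v_j, (j, true) = u_j, with j : 'I_n. *)
Definition pvert (n : nat) := ('I_n * bool)%type.

(* Adjacency of the generalized Petersen graph P(n,k):
   v_j v_{j+1}, v_j u_j, u_j u_{j+k}, subscripts mod n. *)
Definition gp_adj (n k : nat) (x y : pvert n) : bool :=
  let: (i, b) := x in let: (j, c) := y in
  if b == c then
    let s := if b then k else 1%N in
    (val j == (val i + s) %% n) || (val i == (val j + s) %% n)
  else val i == val j.

Definition P2_adj (n : nat) : pvert n -> pvert n -> bool := @gp_adj n 2.

Definition isRDF (n : nat) (f : pvert n -> nat) : Prop :=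
  (forall w, f w <= 2)%N /\
  (forall w, f w = 0%N -> exists x, P2_adj w x && (f x == 2%N)).

Definition rweight (n : nat) (f : pvert n -> nat) : nat := (\sum_(w : pvert n) f w)%N.

Definition is_gammaR_fun (n : nat) (f : pvert n -> nat) : Prop :=
  isRDF f /\ forall g : pvert n -> nat, isRDF g -> (rweight f <= rweight g)%N.

Definition V2 (n : nat) (f : pvert n -> nat) : {set pvert n} :=
  [set w | f w == 2%N].

Local Open Scope ring_scope.

Definition g_f (n : nat) (f : pvert n -> nat) (w : pvert n) : rat :=
  if f w == 2%N then 1 / 2
  else if f w == 1%N then 1
  else (#|[set x | P2_adj w x && (f x == 2%N)]|)%:R / 2.

Definition r_f (n : nat) (f : pvert n -> nat) (w : pvert n) : rat := g_f f w - 1 / 2.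

Definition r_fS (n : nat) (f : pvert n -> nat) (S : {set pvert n}) : rat :=
  \sum_(w in S) r_f f w.

(* V'(i,t) = {v_j, u_j : i <= j <= i+t-1}, subscripts mod n *)
Definition Vp (n i t : nat) : {set pvert n} :=
  [set w : pvert n | [exists s : 'I_t, val w.1 == (i + s) %% n]%N].

Definition is_v (n j : nat) (w : pvert n) : bool := (val w.1 == j %% n)%N && ~~ w.2.

From HB Require Import structures.
From mathcomp Require Import all_boot all_order all_algebra zify lra.
Set Implicit Arguments. Unset Strict Implicit. Unset Printing Implicit Defensive.
Import Order.TTheory GRing.Theory Num.Theory.

(* Let f be a minimum Roman domination function of P(n,2), n >= 5, with the
   fewest vertices labelled 2, and suppose r_f(V'(i,7)) <= 1/2 and f(v_{i+3}) = 2.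
   1. Structure of f: a 1-vertex is never adjacent to a 2-vertex, V2 is an
      independent set, and every 2-vertex has two private neighbours (0-vertices
      dominated by it alone).  Each fact is proved by exhibiting a cheaper RDF
      or one of equal weight with fewer 2-labels.  Also r_f >= 0 everywhere.
   2. Local picture: around v_{i+3} we record which of the sixteen vertices
      v_j (i <= j <= i+6) and u_j (i-1 <= j <= i+7) carry the label 2.  The
      facts of step 1, together with the bound 2 r_f(V'(i,7)) <= 1 (summed
      over the ten vertices v_j, u_j, i+1 <= j <= i+5, whose neighbourhoods
      are all recorded), translate into a decidable "admissibility" test on
      such 16-bit patterns.
   3. An exhaustive computation shows that no pattern with v_{i+3} labelled 2
      is admissible, which proves the theorem. *)

Lemma eq_mod_shift N j y s : 0 < N -> y < N -> s <= N ->
  (j %% N == (y + s) %% N) = (y == (j + N - s) %% N).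
Proof.
move=> N_gt0 yN sN.
have -> : (y == (j + N - s) %% N) = (y + s == j + N - s + s %[mod N]).
  by rewrite eqn_modDr (modn_small yN).
by rewrite subnK ?modnDr 1?eq_sym //; lia.
Qed.

Lemma neq_modD N a d : 0 < d < N -> (a %% N == (a + d) %% N) = false.
Proof.
move=> /andP [d_gt0 dN]; rewrite -{1}(addn0 a) eqn_modDl mod0n modn_small //.
by rewrite eq_sym; apply/negbTE; rewrite -lt0n.
Qed.

Section PetersenP2.
Variable m : nat.

Definition vtx (j : nat) (b : bool) : pvert m.+1 := (inord (j %% m.+1), b).

Lemma vtx_val j b : val (vtx j b).1 = j %% m.+1.
Proof. by rewrite /vtx /= inordK // ltn_pmod. Qed.

Lemma vtx_eq j1 j2 b1 b2 :
  (vtx j1 b1 == vtx j2 b2) = (j1 %% m.+1 == j2 %% m.+1) && (b1 == b2).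
Proof.
rewrite /vtx xpair_eqE /=; congr (_ && _).
by apply/eqP/eqP => [E|->] //; rewrite -(vtx_val j1 b1) -(vtx_val j2 b1) /vtx /= E.
Qed.

Lemma vtxE (w : pvert m.+1) : w = vtx (val w.1) w.2.
Proof.
case: w => x b; rewrite /vtx /= modn_small //.
by congr (_, _); apply: val_inj; rewrite /= inordK.
Qed.

Definition nbrs (j : nat) (b : bool) : seq (pvert m.+1) :=
  if b then [:: vtx (j + 2) true; vtx (j + m.+1 - 2) true; vtx j false]
  else [:: vtx (j + 1) false; vtx (j + m.+1 - 1) false; vtx j true].

Lemma P2_adjE j b y : 1 < m -> P2_adj (vtx j b) y = (y \in nbrs j b).
Proof.
move=> m_gt1; case: y => y c.
have yN := ltn_ord y.
have vj : ((inord (j %% m.+1) : 'I_m.+1) : nat) = j %% m.+1 by rewrite inordK // ltn_pmod.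
rewrite /P2_adj; case: b; rewrite /nbrs 2!in_cons mem_seq1;
rewrite [(y, c)]vtxE !vtx_eq /= (modn_small yN) /gp_adj /vtx /= vj ?inord_val;
case: c => /=; rewrite ?andbT ?andbF ?orbF ?modnDml // eq_mod_shift //; lia.
Qed.

Lemma vtx_near_inj a d b c : 4 <= m -> d < 5 -> vtx a b = vtx (a + d) c -> d = 0 /\ b = c.
Proof.
move=> m_ge4 d_lt5 /eqP; rewrite vtx_eq => /andP [E /eqP ->]; split => //.
by case: d d_lt5 E => [//|d] d_lt5; rewrite neq_modD //; lia.
Qed.

Lemma P2_adj_irr (w : pvert m.+1) : 1 < m -> P2_adj w w = false.
Proof.
move=> m_gt1; case: w => i b; rewrite /P2_adj /gp_adj eqxx orbb.
have iN : val i < m.+1 by exact: ltn_ord.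
by rewrite -{1}(modn_small iN) neq_modD //; case: b; lia.
Qed.

Lemma P2_no_four_nbrs z (a b c d : pvert m.+1) : 1 < m -> uniq [:: a; b; c; d] ->
  P2_adj z a -> P2_adj z b -> P2_adj z c -> P2_adj z d -> False.
Proof.
move=> m_gt1 abcd; rewrite [z]vtxE !P2_adjE // => za zb zc zd.
have : size [:: a; b; c; d] <= size (nbrs (val z.1) z.2).
  by apply: uniq_leq_size abcd _ => t; rewrite !inE => /or4P [] /eqP ->.
by rewrite /nbrs; case: (z.2).
Qed.

End PetersenP2.

Lemma P2_adj_sym n (w x : pvert n) : P2_adj w x = P2_adj x w.
Proof.
case: w x => [i b] [j c]; rewrite /P2_adj /gp_adj (eq_sym c).
by case: eqP => [->|_]; [rewrite orbC | rewrite eq_sym].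
Qed.

Definition upd n (f : pvert n -> nat) (z : pvert n) (v : nat) : pvert n -> nat :=
  fun w => if w == z then v else f w.

Lemma rweight_upd n (f : pvert n -> nat) z v : rweight (upd f z v) + f z = rweight f + v.
Proof.
rewrite /rweight (bigD1 z) //= [in RHS](bigD1 z) //= /upd eqxx.
rewrite (eq_bigr f) => [|w /negbTE ->] //.
by rewrite -addnA addnC; congr (_ + _); rewrite addnC.
Qed.

Lemma card_V2_upd n (f : pvert n -> nat) z v :
  #|V2 (upd f z v)| + (f z == 2) = #|V2 f| + (v == 2).
Proof.
rewrite /V2 (cardD1 z) [in RHS](cardD1 z) !inE /upd eqxx.
have -> : #|[predD1 [set w | (if w == z then v else f w) == 2] & z]| =
          #|[predD1 [set w | f w == 2] & z]|.
  apply: eq_card => w; case: (eqVneq w z) => [->|wz]; first by rewrite !inE eqxx.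
  by rewrite !inE wz (negbTE wz).
by rewrite -addnA addnC; congr (_ + _); rewrite addnC.
Qed.

Definition priv n (f : pvert n -> nat) (z x : pvert n) : bool :=
  [&& P2_adj z x, f x == 0 & [forall t, (P2_adj x t && (f t == 2)) ==> (t == z)]].

Lemma nonpriv_dominated n (f g : pvert n -> nat) z t : isRDF f -> f t = 0 ->
  ~~ priv f z t -> (forall y, y != z -> f y = 2 -> g y = 2) ->
  exists y, P2_adj t y && (g y == 2).
Proof.
move=> [_ f_dom] ft np keep2.
suff [y /and3P [ty /eqP fy yz]] : exists y, [&& P2_adj t y, f y == 2 & y != z].
  by exists y; rewrite ty keep2.
have [y /andP [ty fy]] := f_dom t ft.
case: (eqVneq y z) => [yz | yz]; last by exists y; rewrite ty fy yz.
move: np; rewrite -yz /priv P2_adj_sym ty ft eqxx /= negb_forall => /existsP [y' H].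
by exists y'; move: H; rewrite negb_imply -andbA.
Qed.

Section ExtremalRDF.
Variables (n : nat) (f : pvert n -> nat).
Hypothesis f_gamma : is_gammaR_fun f.
Hypothesis f_fewest2 : forall g : pvert n -> nat, is_gammaR_fun g -> #|V2 f| <= #|V2 g|.

Lemma f_rdf : isRDF f.
Proof. by case: f_gamma. Qed.

Lemma f_le2 w : f w <= 2.
Proof. by case: f_rdf. Qed.

Lemma rdf_weight_ge (g : pvert n -> nat) : isRDF g -> rweight f <= rweight g.
Proof. by case: f_gamma => _; apply. Qed.

Lemma rdf_twos_ge (g : pvert n -> nat) : isRDF g -> rweight g <= rweight f -> #|V2 f| <= #|V2 g|.
Proof.
move=> g_rdf g_le; apply: f_fewest2; split => // h h_rdf.
by apply: leq_trans g_le (rdf_weight_ge h_rdf).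
Qed.

(* A 1-vertex is never adjacent to a 2-vertex: it could be relabelled 0. *)
Lemma one_not_next_to_two w x : f w = 1 -> P2_adj w x -> f x = 2 -> False.
Proof.
move=> fw1 wx fx2; have [_ f_dom] := f_rdf.
have xw : x != w by apply/eqP => E; move: fx2; rewrite E fw1.
have g_rdf : isRDF (upd f w 0).
  split=> t; rewrite /upd; first by case: eqP => // _; apply: f_le2.
  case: eqP => [-> _ | tw ft]; first by exists x; rewrite wx /= (negbTE xw) fx2.
  have [y /andP [ty /eqP fy]] := f_dom t ft.
  have yw : y != w by apply/eqP => E; move: fy; rewrite E fw1.
  by exists y; rewrite ty /= (negbTE yw) fy.
have := rdf_weight_ge g_rdf; have := rweight_upd f w 0; rewrite fw1; lia.
Qed.

(* Every 2-vertex has two distinct private neighbours: otherwise relabelling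
   it 1 (and its unique private neighbour 1) gives a better RDF. *)
Lemma two_private_nbrs z : f z = 2 -> exists x1 x2, [/\ x1 != x2, priv f z x1 & priv f z x2].
Proof.
move=> fz; set P := [set x | priv f z x].
case: (ltnP 1 #|P|) => [/card_gt1P [x1 [x2 [P1 P2 ne]]] | /card_le1_eqP P_le1].
  by exists x1, x2; rewrite !inE in P1 P2.
exfalso.
case: (set_0Vmem P) => [P0 | [x Px]].
- have g_rdf : isRDF (upd f z 1).
    split=> t; rewrite /upd; first by case: eqP => // _; apply: f_le2.
    case: eqP => // /eqP tz ft.
    have np : ~~ priv f z t by apply/negP => pt; move: P0 => /setP /(_ t); rewrite !inE pt.
    apply: nonpriv_dominated f_rdf ft np _ => y yz; rewrite (negbTE yz) //.
  have := rdf_weight_ge g_rdf; have := rweight_upd f z 1; rewrite fz; lia.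
- have px : priv f z x by rewrite inE in Px.
  have fx0 : f x = 0 by case/and3P: px => _ /eqP.
  have xz : x != z by apply/eqP => E; move: fx0; rewrite E fz.
  have g_rdf : isRDF (upd (upd f z 1) x 1).
    split=> t; rewrite /upd; first by do 2 (case: eqP => // _); apply: f_le2.
    case: eqP => // /eqP tx; case: eqP => // /eqP tz ft.
    have np : ~~ priv f z t.
      by apply/negP => pt; move/eqP: tx; apply; apply: P_le1; rewrite inE.
    apply: nonpriv_dominated f_rdf ft np _ => y yz fy.
    by rewrite (negbTE yz); case: eqP => // yx; move: fy; rewrite yx fx0.
  have ux : upd f z 1 x = 0 by rewrite /upd (negbTE xz).
  have w1 := rweight_upd (upd f z 1) x 1; have w2 := rweight_upd f z 1.
  have c1 := card_V2_upd (upd f z 1) x 1; have c2 := card_V2_upd f z 1.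
  rewrite ux fz /= in w1 w2 c1 c2.
  have g_le : rweight (upd (upd f z 1) x 1) <= rweight f by lia.
  have := rdf_twos_ge g_rdf g_le; move: c1 c2.
  set a := #|V2 (upd _ x 1)|; set b := #|V2 (upd f z 1)|; set c := #|V2 f|; lia.
Qed.

End ExtremalRDF.

Section ExtremalIndependent.
Variables (m : nat) (f : pvert m.+1 -> nat).
Hypothesis m_ge4 : 4 <= m.
Hypothesis f_gamma : is_gammaR_fun f.
Hypothesis f_fewest2 : forall g : pvert m.+1 -> nat, is_gammaR_fun g -> #|V2 f| <= #|V2 g|.

(* V2 is independent: if z, w are adjacent 2-vertices, relabel z by 0 (it is
   dominated by w) and its two private neighbours x1, x2 by 1.  The weight is
   unchanged, there is one 2-label less, and every other 0-vertex t adjacent to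
   z is still dominated, since z already has the three neighbours x1, x2, w. *)
Lemma V2_independent z w : f z = 2 -> f w = 2 -> P2_adj z w -> False.
Proof.
move=> fz fw zw; have m_gt1 : 1 < m by apply: leq_trans m_ge4.
have [x1 [x2 [ne p1 p2]]] := two_private_nbrs f_gamma f_fewest2 fz.
have [zx1 /eqP fx1 _] := and3P p1; have [zx2 /eqP fx2 _] := and3P p2.
have x1z : x1 != z by apply/eqP => E; move: fx1; rewrite E fz.
have x2z : x2 != z by apply/eqP => E; move: fx2; rewrite E fz.
have wz : w != z by apply/eqP => E; move: zw; rewrite E P2_adj_irr.
have wx1 : w != x1 by apply/eqP => E; move: fw; rewrite E fx1.
have wx2 : w != x2 by apply/eqP => E; move: fw; rewrite E fx2.
set g := upd (upd (upd f z 0) x1 1) x2 1.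
have g_rdf : isRDF g.
  rewrite /g /upd; split=> t.
    by case: (t == x2); case: (t == x1); case: (t == z); rewrite ?f_le2.
  case: (eqVneq t x2) => // tx2; case: (eqVneq t x1) => // tx1.
  case: (eqVneq t z) => [-> _ | tz ft].
    by exists w; rewrite zw (negbTE wx2) (negbTE wx1) (negbTE wz) fw.
  have np : ~~ priv f z t.
    apply/negP => /and3P [zt _ _].
    have tx1x2w : uniq [:: t; x1; x2; w].
      rewrite /= !inE !negb_or tx1 tx2 ne (eq_sym x1) (eq_sym x2) wx1 wx2 /= !andbT.
      by apply/eqP => E; move: fw; rewrite -E ft.
    exact: (P2_no_four_nbrs m_gt1 tx1x2w zt zx1 zx2 zw).
  apply: nonpriv_dominated (f_rdf f_gamma) ft np _ => y yz fy.
  have yx1 : y != x1 by apply/eqP => E; move: fy; rewrite E fx1.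
  have yx2 : y != x2 by apply/eqP => E; move: fy; rewrite E fx2.
  by rewrite (negbTE yx2) (negbTE yx1) (negbTE yz).
have u1 : upd (upd f z 0) x1 1 x2 = 0 by rewrite /upd eq_sym (negbTE ne) (negbTE x2z).
have u2 : upd f z 0 x1 = 0 by rewrite /upd (negbTE x1z).
have w1 := rweight_upd (upd (upd f z 0) x1 1) x2 1.
have w2 := rweight_upd (upd f z 0) x1 1; have w3 := rweight_upd f z 0.
have c1 := card_V2_upd (upd (upd f z 0) x1 1) x2 1.
have c2 := card_V2_upd (upd f z 0) x1 1; have c3 := card_V2_upd f z 0.
rewrite u1 u2 fz /= in w1 w2 w3 c1 c2 c3.
have g_le : rweight g <= rweight f by rewrite /g; lia.
have := rdf_twos_ge f_gamma f_fewest2 g_rdf g_le; move: c1 c2 c3; rewrite /g.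
set a := #|V2 (upd _ x2 1)|; set b := #|V2 (upd _ x1 1)|; set c := #|V2 (upd f z 0)|.
set d := #|V2 f|; lia.
Qed.

End ExtremalIndependent.

(* Every vertex has r_f >= 0 : a 0-vertex has at least one 2-neighbour. *)
Lemma r_f_ge0 n (f : pvert n -> nat) w : isRDF f -> (0 <= r_f f w)%R.
Proof.
move=> [f_bd f_dom]; rewrite /r_f /g_f.
case: eqP => [_|f_ne2]; first by rewrite subrr.
case: eqP => [_|f_ne1]; first by lra.
have fw0 : f w = 0 by have := f_bd w; move: f_ne2 f_ne1; lia.
have [x /andP [wx fx]] := f_dom w fw0.
have : 0 < #|[set x | P2_adj w x && (f x == 2)]| by apply/card_gt0P; exists x; rewrite inE wx fx.
rewrite -(ler_nat rat); lra.
Qed.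

(* A local vertex (p, b) stands for v_{i+p-3} (b = false) or u_{i+p-3}
   (b = true) relative to a base index i; thus v_{i+3} is (6, false). *)
Definition lvert := (nat * bool)%type.

(* The tracked vertices v_p (3 <= p <= 9) and u_p (2 <= p <= 10): the closed
   neighbourhood of the window below, sixteen vertices in all. *)
Definition tracked (x : lvert) : bool :=
  if x.2 then 2 <= x.1 <= 10 else 3 <= x.1 <= 9.

Definition tracked_list : seq lvert :=
  [seq (p, false) | p <- iota 3 7] ++ [seq (p, true) | p <- iota 2 9].

(* The window v_p, u_p for 4 <= p <= 8, i.e. the middle of V'(i,7). *)
Definition window_list : seq lvert := [seq (p, b) | p <- iota 4 5, b <- [:: false; true]].

Definition lnbrs (x : lvert) : seq lvert :=
  if x.2 then [:: (x.1 + 2, true); (x.1 - 2, true); (x.1, false)]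
  else [:: (x.1 + 1, false); (x.1 - 1, false); (x.1, true)].

(* In what follows [sm x] means "x is tracked and labelled 2"; sm is false on
   untracked vertices. *)

(* x can be a private neighbour of the 2-vertex z: either x is untracked (so
   nothing is known about it), or x is not a 2-vertex and no neighbour of x
   other than z is. *)
Definition may_be_private (sm : lvert -> bool) (z x : lvert) : bool :=
  ~~ tracked x || (~~ sm x && all (fun t => (t == z) || ~~ sm t) (lnbrs x)).

Definition independent (sm : lvert -> bool) : bool :=
  all (fun z => sm z ==> ~~ has sm (lnbrs z)) tracked_list.

Definition two_private (sm : lvert -> bool) : bool :=
  all (fun z => sm z ==> (1 < count (may_be_private sm z) (lnbrs z))) tracked_list.

(* A lower bound for 2 r_f(w) on a window vertex w, read off its k labelled
   neighbours: 0 on a 2-vertex, else 1 if k = 0 (w is then a 1-vertex) and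
   k - 1 otherwise (w is then a 0-vertex with k 2-neighbours). *)
Definition deficit (sm : lvert -> bool) (w : lvert) : nat :=
  if sm w then 0 else let k := count sm (lnbrs w) in if k == 0 then 1 else k.-1.

(* The deficits on the window sum to at most 2 * 1/2. *)
Definition within_budget (sm : lvert -> bool) : bool :=
  sumn (map (deficit sm) window_list) <= 1.

(* The
   conjunction is written with [if] so that the (call-by-value) evaluation in
   the exhaustive search below stops at the first failed condition. *)
Definition admissible (sm : lvert -> bool) : bool :=
  if sm (6, false) then if within_budget sm then if independent sm then two_private sm
  else false else false else false.

(* Patterns are encoded by 16 bits, one per tracked vertex. *)
Definition code (x : lvert) : nat := if x.2 then x.1 + 5 else x.1 - 3.
Definition decode (k : nat) : lvert := if k < 7 then (k + 3, false) else (k - 5, true).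

Definition of_bits (vec : seq bool) (x : lvert) : bool := tracked x && nth false vec (code x).

Lemma decode_code x : tracked x -> decode (code x) = x /\ code x < 16.
Proof.
case: x => p [] /andP [p_lo p_hi]; rewrite /= in p_lo p_hi; rewrite /decode /code /=.
- have -> : (p + 5 < 7) = false by apply/negbTE; rewrite -leqNgt; lia.
  by rewrite addnK; split => //; lia.
- have -> : (p - 3 < 7) = true by apply/idP; lia.
  by rewrite subnK //; split => //; lia.
Qed.

Fixpoint all_bits (k : nat) : seq (seq bool) :=
  if k is k'.+1 then [seq b :: v | b <- [:: true; false], v <- all_bits k'] else [:: [::]].

Lemma all_bitsP k v : size v = k -> v \in all_bits k.
Proof.
elim: k v => [|k IH] [|b v] //= [] /IH v_in.
rewrite mem_cat; case: b; [apply/orP; left | apply/orP; right; rewrite cats0]; exact: map_f.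
Qed.

Lemma no_admissible_bits : all (fun v => ~~ admissible (of_bits v)) (all_bits 16).
Proof. by vm_compute. Qed.

Lemma not_admissible vec : size vec = 16 -> ~~ admissible (of_bits vec).
Proof. by move=> /all_bitsP vec_in; apply: (allP no_admissible_bits). Qed.

(* Tracked vertices have p >= 2, so their local neighbours need no
   truncated subtraction, and neighbours have nearby positions. *)
Lemma tracked_ge2 x : tracked x -> 2 <= x.1.
Proof. by case: x => p [] /andP [] /=; lia. Qed.

Lemma lnbrs_near x (s : lvert) : s \in lnbrs x -> 2 <= x.1 -> s.1 <= x.1 + 2 /\ x.1 <= s.1 + 2.
Proof. by case: x => p [] /=; rewrite !inE => /or3P [] /eqP -> /=; lia. Qed.

Lemma count_gt1 (T : eqType) (P : pred T) (l : seq T) a b :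
  a \in l -> b \in l -> a != b -> P a -> P b -> 1 < count P l.
Proof.
move=> al bl ab Pa Pb; rewrite -size_filter.
have ab_uniq : uniq [:: a; b] by rewrite /= inE ab.
by apply: (uniq_leq_size ab_uniq) => t; rewrite !inE mem_filter => /orP [] /eqP ->; apply/andP.
Qed.

Lemma window_facts :
  all (fun x => [&& tracked x, all tracked (lnbrs x), uniq (lnbrs x) & 4 <= x.1 <= 8]) window_list.
Proof. by []. Qed.

Section Placement.
Variables m i : nat.

(* The subscript i + p - 3, shifted by 2n to avoid truncated subtraction. *)
Definition gidx (p : nat) : nat := i + 2 * m.+1 + p - 3.

Definition place (x : lvert) : pvert m.+1 := vtx m (gidx x.1) x.2.

Lemma place_lnbrs x : 0 < m -> 2 <= x.1 -> map place (lnbrs x) = nbrs m (gidx x.1) x.2.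
Proof.
case: x => p b m_gt0 /= p_ge2; rewrite /lnbrs /nbrs /place /=.
case: b => /=; congr [:: _; _; _]; try by congr vtx; rewrite /gidx; lia.
- apply/eqP; rewrite vtx_eq eqxx andbT.
  have -> : gidx p + m.+1 - 2 = 1 * m.+1 + gidx (p - 2) by rewrite /gidx; lia.
  by rewrite modnMDl.
- apply/eqP; rewrite vtx_eq eqxx andbT.
  have -> : gidx p + m.+1 - 1 = 1 * m.+1 + gidx (p - 1) by rewrite /gidx; lia.
  by rewrite modnMDl.
Qed.

Lemma P2_adj_place x y : 1 < m -> 2 <= x.1 ->
  P2_adj (place x) y = (y \in map place (lnbrs x)).
Proof. by move=> m_gt1 p_ge2; rewrite place_lnbrs ?P2_adjE // ltnW. Qed.

Lemma place_inj x y : 4 <= m ->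
  place x = place y -> x.1 <= y.1 + 4 -> y.1 <= x.1 + 4 -> x = y.
Proof.
move=> m_ge4; case: x y => p b [q c] /=.
wlog pq : p q b c / p <= q.
  move=> W E h1 h2; case: (leqP p q) => H; first exact: W.
  by symmetry; apply: W => //; lia.
rewrite /place /= => E h1 h2.
have gq : gidx q = gidx p + (q - p) by rewrite /gidx; lia.
have d_lt5 : q - p < 5 by lia.
rewrite gq in E; have [d0 ->] := vtx_near_inj m_ge4 d_lt5 E.
by congr pair; lia.
Qed.

Lemma place_nbr_inj x (s t : lvert) : 4 <= m -> 2 <= x.1 ->
  s \in lnbrs x -> t \in lnbrs x -> place s = place t -> s = t.
Proof.
move=> m_ge4 x_ge2 sx tx E.
have [s1 s2] := lnbrs_near sx x_ge2; have [t1 t2] := lnbrs_near tx x_ge2.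
by apply: (place_inj m_ge4 E); lia.
Qed.

Lemma place_center (w : pvert m.+1) : is_v (i + 3) w -> place (6, false) = w.
Proof.
rewrite /is_v => /andP [/eqP w_idx w_v].
rewrite [w]vtxE /place; apply/eqP; rewrite vtx_eq /= (negbTE w_v) w_idx modn_mod andbT.
have -> : gidx 6 = 2 * m.+1 + (i + 3) by rewrite /gidx; lia.
by rewrite modnMDl.
Qed.

Lemma place_window_in_Vp x : x \in window_list -> place x \in Vp m.+1 i 7.
Proof.
case: x => p b xW; have /and4P [_ _ _ /andP [p_ge4 p_le8]] := allP window_facts _ xW.
rewrite /= in p_ge4 p_le8; rewrite inE; apply/existsP.
have p3_lt7 : p - 3 < 7 by lia.
exists (Ordinal p3_lt7); rewrite /place vtx_val /=.
have -> : gidx p = 2 * m.+1 + (i + (p - 3)) by rewrite /gidx; lia.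
by rewrite modnMDl.
Qed.

End Placement.

Section LocalPattern.
Variables (m i : nat) (f : pvert m.+1 -> nat).
Hypothesis m_ge4 : 4 <= m.
Hypothesis f_gamma : is_gammaR_fun f.
Hypothesis f_fewest2 : forall g : pvert m.+1 -> nat, is_gammaR_fun g -> #|V2 f| <= #|V2 g|.

Let m_gt1 : 1 < m. Proof. exact: leq_trans m_ge4. Qed.
Local Notation place := (place m i).

Definition local_bits : seq bool := [seq f (place (decode k)) == 2 | k <- iota 0 16].

Definition local_V2 : lvert -> bool := of_bits local_bits.

Lemma local_V2E x : local_V2 x = tracked x && (f (place x) == 2).
Proof.
rewrite /local_V2 /of_bits; case: (boolP (tracked x)) => //= x_tr.
have [dec c16] := decode_code x_tr.
by rewrite (nth_map 0) ?size_iota // nth_iota // add0n dec.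
Qed.

Lemma independent_local : independent local_V2.
Proof.
apply/allP => z _; apply/implyP => z2; apply/hasPn => t tz; apply/negP => t2.
move: z2 t2; rewrite !local_V2E => /andP [z_tr /eqP fz] /andP [_ /eqP ft].
apply: (V2_independent m_ge4 f_gamma f_fewest2 fz ft).
by rewrite P2_adj_place ?map_f ?tracked_ge2.
Qed.

Lemma may_be_private_local z s : tracked z -> s \in lnbrs z ->
  priv f (place z) (place s) -> may_be_private local_V2 z s.
Proof.
move=> z_tr sz /and3P [_ /eqP fs0 /forallP only_z].
rewrite /may_be_private; case: (boolP (tracked s)) => //= s_tr.
rewrite local_V2E s_tr fs0 /=; apply/allP => t ts.
case: (eqVneq t z) => //= tz; rewrite local_V2E; apply/negP => /andP [_ /eqP ft].
have := only_z (place t); rewrite P2_adj_place ?tracked_ge2 // map_f //= ft eqxx /=.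
have [h1 h2] := lnbrs_near sz (tracked_ge2 z_tr).
have [h3 h4] := lnbrs_near ts (tracked_ge2 s_tr).
by move=> /eqP /(place_inj m_ge4) E; move: tz; rewrite E ?eqxx //; lia.
Qed.

Lemma two_private_local : two_private local_V2.
Proof.
apply/allP => z _; apply/implyP; rewrite local_V2E => /andP [z_tr /eqP fz].
have z_ge2 := tracked_ge2 z_tr.
have [x1 [x2 [ne p1 p2]]] := two_private_nbrs f_gamma f_fewest2 fz.
have local_nbr x : priv f (place z) x -> exists2 s, s \in lnbrs z & x = place s.
  by case/and3P; rewrite P2_adj_place // => /mapP.
have [s1 s1z def_x1] := local_nbr _ p1; have [s2 s2z def_x2] := local_nbr _ p2.
rewrite {}def_x1 {}def_x2 in ne p1 p2.
apply: (count_gt1 s1z s2z); try exact: may_be_private_local.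
by apply: contraNneq ne => ->.
Qed.

Lemma count_local_V2 x : x \in window_list ->
  count local_V2 (lnbrs x) <= #|[set y | P2_adj (place x) y && (f y == 2)]|.
Proof.
move=> xW; have /and4P [_ nbrs_tr nbrs_uniq /andP [x_ge4 _]] := allP window_facts x xW.
have x_ge2 : 2 <= x.1 by apply: leq_trans x_ge4.
rewrite (@eq_in_count _ _ (fun s => f (place s) == 2)); last first.
  by move=> s sx; rewrite local_V2E (allP nbrs_tr s sx).
rewrite -(count_map place (fun y => f y == 2)) -size_filter cardE.
apply: uniq_leq_size.
  apply: filter_uniq; rewrite map_inj_in_uniq // => s t sx tx.
  exact: (place_nbr_inj m_ge4 x_ge2 sx tx).
move=> y; rewrite mem_filter mem_enum inE => /andP [fy yx].
by rewrite P2_adj_place // yx.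
Qed.

Lemma deficit_le x : x \in window_list -> ((deficit local_V2 x)%:R <= 2 * r_f f (place x))%R.
Proof.
move=> xW; have /and4P [x_tr nbrs_tr _ /andP [x_ge4 _]] := allP window_facts x xW.
have x_ge2 : 2 <= x.1 by apply: leq_trans x_ge4.
have r_ge0 := r_f_ge0 (place x) (f_rdf f_gamma).
have := count_local_V2 xW; rewrite /deficit local_V2E x_tr /=.
case: eqP => [_ | fx_ne2]; first by rewrite mulr_ge0.
set k := count _ _; set K := #|_| => k_le_K.
have [fx0 | fx1] : f (place x) = 0 \/ f (place x) = 1.
  by have := f_le2 f_gamma (place x); move: fx_ne2; lia.
- have k_gt0 : 0 < k.
    have [y /andP [xy fy]] := (f_rdf f_gamma).2 _ fx0.
    move: xy; rewrite P2_adj_place // => /mapP [s sx def_y].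
    rewrite /k -has_count; apply/hasP; exists s => //.
    by rewrite local_V2E (allP nbrs_tr s sx) -def_y.
  move: k_le_K k_gt0; rewrite /r_f /g_f fx0 /= -/K.
  case: k => [//|k] k_le_K _ /=.
  have : (k.+1%:R <= K%:R :> rat)%R by rewrite ler_nat.
  rewrite -addn1 natrD; lra.
- have -> : k = 0.
    apply/eqP; rewrite -leqn0 leqNgt -has_count; apply/hasP => [[s sx]].
    rewrite local_V2E => /andP [_ /eqP fs].
    by apply: (one_not_next_to_two f_gamma fx1 _ fs); rewrite P2_adj_place // map_f.
  by rewrite /r_f /g_f fx1 /=; lra.
Qed.

(* The window vertices are distinct members of V'(i,7), and r_f >= 0. *)
Lemma window_sum_le : (\sum_(x <- window_list) r_f f (place x) <= r_fS f (Vp m.+1 i 7))%R.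
Proof.
have place_uniq : uniq (map place window_list).
  rewrite map_inj_in_uniq // => x y xW yW E.
  have /and4P [_ _ _ /andP [? ?]] := allP window_facts x xW.
  have /and4P [_ _ _ /andP [? ?]] := allP window_facts y yW.
  by apply: (place_inj m_ge4 E); lia.
rewrite -(big_map place xpredT (r_f f)) big_uniq //= /r_fS.
rewrite [X in (_ <= X)%R](bigID (mem (map place window_list))) /=.
have -> : (\sum_(w in Vp m.+1 i 7 | w \in map place window_list) r_f f w =
           \sum_(w in map place window_list) r_f f w)%R.
  apply: eq_bigl => w; case wW: (w \in map place window_list); rewrite ?andbT ?andbF //.
  by move: wW => /mapP [x xW ->]; apply: place_window_in_Vp.
by rewrite lerDl sumr_ge0 // => w _; apply: r_f_ge0 (f_rdf f_gamma).
Qed.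

Lemma within_budget_local : (r_fS f (Vp m.+1 i 7) <= 1 / 2)%R -> within_budget local_V2.
Proof.
move=> r_le; rewrite /within_budget -(ler_nat rat) sumnE big_map natr_sum.
apply: (@le_trans _ _ (\sum_(x <- window_list) 2 * r_f f (place x))%R).
  by rewrite !big_seq; apply: ler_sum => x xW; apply: deficit_le.
by rewrite -mulr_sumr; have := window_sum_le; lra.
Qed.

End LocalPattern.

Theorem lemma2p5 (n : nat) (f : pvert n -> nat) :
  (5 <= n)%N ->
  is_gammaR_fun f ->
  (forall g : pvert n -> nat, is_gammaR_fun g -> (#|V2 f| <= #|V2 g|)%N) ->
  forall i : nat,
    (r_fS f (@Vp n i 7) <= 1 / 2)%R ->
    forall w : pvert n, @is_v n (i + 3) w -> w \notin V2 f.
Proof.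
case: n f => [//|m] f m_ge4 f_gamma f_fewest2 i r_le w w_v; apply/negP => w_V2.
have center_V2 : local_V2 i f (6, false).
  by rewrite local_V2E (place_center w_v); rewrite inE in w_V2.
have : admissible (local_V2 i f).
  rewrite /admissible center_V2 within_budget_local //.
  by rewrite independent_local // two_private_local.
by apply/negP/not_admissible; rewrite size_map size_iota.
Qed.
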